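(* In the setting below, there exist $K>0$ and $\hat\beta>0$ such that for all $\beta<\hat\beta$, $D,h\in\mathbb{R}$ and $N\ge2$, \[|p-p_-|\le\frac KN,\qquad |q-q_-|\le\frac KN.\]
   Context: Fix $S\ge1$ and let $X$ be standard Gaussian. For $b\ge0$ consider the system in $(p,q)$ $p=\mathbb{E}\big[\frac{\sum_{\gamma=1}^{S}\gamma^2\, 2\cosh[\gamma(\sqrt{q}bX+h)]e^{\gamma^2[D+\frac{b^2}{2}(p-q)]}}{1+\sum_{\gamma=1}^{S}2\cosh[\gamma(\sqrt{q}bX+h)]e^{\gamma^2[D+\frac{b^2}{2}(p-q)]}}\big]$, $q=\mathbb{E}\big[\big(\frac{\sum_{\gamma=1}^{S}\gamma\, 2\sinh[\gamma(\sqrt{q}bX+h)]e^{\gamma^2[D+\frac{b^2}{2}(p-q)]}}{1+\sum_{\gamma=1}^{S}2\cosh[\gamma(\sqrt{q}bX+h)]e^{\gamma^2[D+\frac{b^2}{2}(p-q)]}}\big)^2\big]$, which for $b$ below some threshold $\tilde\beta>0$ has a unique solution; $\beta<\tilde\beta$ is assumed. Let $(p,q)$ be the solution with $b=\beta$, let $\beta_-=\beta\sqrt{(N-1)/N}$ (so $\beta_-/\sqrt{N-1}=\beta/\sqrt N$), and let $(p_-,q_-)$ be the solution with $b=\beta_-$. *)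

From Stdlib Require Import Reals Lra.
From Coquelicot Require Import Coquelicot.
Open Scope R_scope.

Fixpoint sum_spins (S : nat) (g : R -> R) : R :=
  match S with
  | O => 0
  | Datatypes.S S' => sum_spins S' g + g (INR S)
  end.

Definition gauss (x : R) : R := exp (- (x ^ 2) / 2) / sqrt (2 * PI).

Definition fld (b q h x gamma : R) : R := gamma * (sqrt q * b * x + h).

Definition efac (b D p q gamma : R) : R :=
  exp (gamma ^ 2 * (D + b ^ 2 / 2 * (p - q))).

Definition Zden (S : nat) (b D h p q x : R) : R :=
  1 + sum_spins S (fun g => 2 * cosh (fld b q h x g) * efac b D p q g).

Definition numP (S : nat) (b D h p q x : R) : R :=
  sum_spins S (fun g => g ^ 2 * (2 * cosh (fld b q h x g)) * efac b D p q g).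

Definition numQ (S : nat) (b D h p q x : R) : R :=
  sum_spins S (fun g => g * (2 * sinh (fld b q h x g)) * efac b D p q g).

(* (p,q) solves the fixed-point system with parameter b; the Gaussian
   expectations E[f(X)] are the (convergent) improper integrals
   int_{-oo}^{+oo} f(x) gauss(x) dx. *)
Definition is_solution (S : nat) (b D h p q : R) : Prop :=
  is_RInt_gen (fun x => gauss x * (numP S b D h p q x / Zden S b D h p q x))
    (Rbar_locally m_infty) (Rbar_locally p_infty) p /\
  is_RInt_gen (fun x => gauss x * (numQ S b D h p q x / Zden S b D h p q x) ^ 2)
    (Rbar_locally m_infty) (Rbar_locally p_infty) q.

Definition is_unique_solution (S : nat) (b D h p q : R) : Prop :=
  is_solution S b D h p q /\
  forall p' q', is_solution S b D h p' q' -> p' = p /\ q' = q.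

From Stdlib Require Import Reals Lra Lia.
From Coquelicot Require Import Coquelicot.
Open Scope R_scope.

(* The right-hand sides of the fixed-point system are Gaussian averages of the single-spin
   moments <g^2> and <g>^2 taken at field y = sqrt q b x + h and coupling w = D + b^2/2 (p - q).
   These moments are Lipschitz in (y, w) with a constant depending only on S, and the Gaussian
   weight absorbs the resulting linear growth in x. Hence |p - p'|, |q - q'| and |sqrt q - sqrt q'|
   are at most C X for two solutions, where X is the gap between their effective parameters
   (sqrt q b, b^2/2 (p - q)). For b' = beta sqrt (1 - 1/N) that gap is in turn at most
   (beta + beta^2) C (1/N + X), so for small beta it absorbs itself: X <= 1/N. *)

Lemma continuity_of_ex_derive (f : R -> R) : (forall x, ex_derive f x) -> continuity f.
Proof.
  intros Hf x. apply continuity_pt_filterlim.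
  apply (ex_derive_continuous (K := R_AbsRing) (V := R_NormedModule)), Hf.
Qed.

Lemma continuity_pow2 (f : R -> R) : continuity f -> continuity (fun x => f x ^ 2).
Proof.
  intros Hf x. apply (continuity_pt_ext (fun x => f x * f x)); [intros; ring|].
  apply continuity_pt_mult; apply Hf.
Qed.

Lemma continuity_affine (t h : R) : continuity (fun x => t * x + h).
Proof.
  apply continuity_of_ex_derive. intros x. auto_derive. easy.
Qed.

Lemma ex_RInt_of_continuity (f : R -> R) (a b : R) : continuity f -> ex_RInt f a b.
Proof.
  intros Hf. apply (ex_RInt_continuous (V := R_CompleteNormedModule)).
  intros x _. apply continuity_pt_filterlim, Hf.
Qed.

Lemma is_RInt_gen_lim_seq (f : R -> R) (l : R) :
  is_RInt_gen f (Rbar_locally m_infty) (Rbar_locally p_infty) l ->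
  is_lim_seq (fun n => RInt f (- INR n) (INR n)) l.
Proof.
  intros Hf.
  assert (Hbounds : filterlim (fun n : nat => (- INR n, INR n)) eventually
     (filter_prod (Rbar_locally m_infty) (Rbar_locally p_infty))).
  { apply filterlim_pair; [apply (is_lim_seq_opp _ p_infty) |]; apply is_lim_seq_INR. }
  pose proof (filterlimi_comp _ _ _ _ _ _ _ _ Hbounds Hf) as Hseq. simpl in Hseq.
  apply (filterlim_locally (fun n => RInt f (- INR n) (INR n)) l). intros eps.
  generalize (proj1 (filterlimi_locally _ _) Hseq eps). apply filter_imp.
  intros n [z [Hz Hball]]. rewrite (is_RInt_unique _ _ _ _ Hz). exact Hball.
Qed.

Lemma is_lim_seq_abs_le (u : nat -> R) (l B : R) :
  is_lim_seq u l -> (forall n, Rabs (u n) <= B) -> Rabs l <= B.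
Proof.
  intros Hu Hb.
  exact (is_lim_seq_le _ _ (Rabs l) B Hb (is_lim_seq_abs _ _ Hu) (is_lim_seq_const B)).
Qed.

Lemma is_lim_seq_ge0 (u : nat -> R) (l : R) :
  is_lim_seq u l -> (forall n, 0 <= u n) -> 0 <= l.
Proof.
  intros Hu Hb. exact (is_lim_seq_le _ _ 0 l Hb (is_lim_seq_const 0) Hu).
Qed.

Lemma one_plus_abs_bounds (x : R) : 1 <= 1 + Rabs x <= (1 + Rabs x) ^ 2.
Proof. pose proof (Rabs_pos x). nra. Qed.

Lemma abs_le_of_pow2_le (a c : R) : 0 <= c -> a ^ 2 <= c ^ 2 -> Rabs a <= c.
Proof.
  intros Hc Hac. rewrite <- (Rabs_pos_eq c Hc). apply Rsqr_le_abs_0. rewrite !Rsqr_pow2. exact Hac.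
Qed.

Lemma le_sqrt_mul_of_quadratic_ge0 (A B C : R) : 0 <= A -> 0 <= B ->
  (forall l, 0 <= l ^ 2 * A - 2 * l * C + B) -> C <= sqrt A * sqrt B.
Proof.
  intros HA HB Hquad.
  destruct (Rle_lt_dec C 0) as [HC0 | HC0].
  { pose proof (sqrt_pos A); pose proof (sqrt_pos B); nra. }
  destruct (Req_dec A 0) as [HA0 | HA0].
  { specialize (Hquad ((B + 1) / (2 * C))). rewrite HA0 in Hquad.
    replace (((B + 1) / (2 * C)) ^ 2 * 0 - 2 * ((B + 1) / (2 * C)) * C + B) with (-1)
      in Hquad by (field; lra). lra. }
  specialize (Hquad (C / A)).
  replace ((C / A) ^ 2 * A - 2 * (C / A) * C + B) with (B - C ^ 2 / A) in Hquad by (field; lra).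
  assert (C ^ 2 <= A * B).
  { apply Rmult_le_reg_r with (/ A); [apply Rinv_0_lt_compat; lra|].
    replace (A * B * / A) with B by (field; lra). unfold Rdiv in Hquad. lra. }
  rewrite <- sqrt_mult, <- (sqrt_pow2 C) by lra. apply sqrt_le_1_alt. lra.
Qed.

Lemma RInt_cauchy_le (c a : R) : 0 <= c -> RInt (fun x => c / (1 + x ^ 2)) (- a) a <= c * PI.
Proof.
  intros Hc.
  rewrite (is_RInt_unique _ _ _ (c * atan a - c * atan (- a))).
  - pose proof (atan_bound a); pose proof (atan_bound (- a)); nra.
  - apply (is_RInt_derive (fun x => c * atan x)).
    + intros x _. apply (is_derive_ext (fun x => scal c (atan x))); [reflexivity|].
      apply is_derive_scal, is_derive_Reals, derivable_pt_lim_atan.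
    + intros x _. apply continuity_pt_filterlim.
      apply (continuity_pt_ext (fun x => c * / (1 + x ^ 2))); [reflexivity|].
      apply continuity_pt_scal, continuity_pt_inv; [| nra].
      apply derivable_continuous_pt; reg.
Qed.

Lemma gauss_pos (x : R) : 0 < gauss x.
Proof.
  apply Rdiv_lt_0_compat; [apply exp_pos|]. apply sqrt_lt_R0. pose proof PI_RGT_0; lra.
Qed.

Lemma continuity_gauss : continuity gauss.
Proof.
  apply continuity_of_ex_derive. intros x. unfold gauss. auto_derive.
  pose proof PI_RGT_0; pose proof (sqrt_lt_R0 (2 * PI)); lra.
Qed.

Lemma gauss_decay (x : R) : gauss x * (1 + Rabs x) ^ 2 <= 32 / (1 + x ^ 2).
Proof.
  assert (Hx2 : 0 <= x ^ 2) by nra.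
  assert (Hpoly : (1 + x ^ 2) * (1 + Rabs x) ^ 2 <= 32 * (1 + x ^ 2 / 4) ^ 2).
  { rewrite <- (pow2_abs x) in *. pose proof (Rabs_pos x). nra. }
  assert (Hexp : (1 + x ^ 2 / 4) ^ 2 <= exp (x ^ 2 / 2)).
  { replace (x ^ 2 / 2) with (x ^ 2 / 4 + x ^ 2 / 4) by field.
    rewrite exp_plus. pose proof (exp_ineq1_le (x ^ 2 / 4)). nra. }
  assert (Hnorm : gauss x * exp (x ^ 2 / 2) <= 1).
  { unfold gauss. replace (- x ^ 2 / 2) with (- (x ^ 2 / 2)) by field. rewrite exp_Ropp.
    assert (H2PI : 1 <= sqrt (2 * PI)).
    { rewrite <- sqrt_1. apply sqrt_le_1_alt. pose proof PI2_3_2; lra. }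
    pose proof (exp_pos (x ^ 2 / 2)).
    replace (/ exp (x ^ 2 / 2) / sqrt (2 * PI) * exp (x ^ 2 / 2)) with (/ sqrt (2 * PI))
      by (field; lra).
    rewrite <- Rinv_1. apply Rinv_le_contravar; lra. }
  pose proof (gauss_pos x).
  apply Rmult_le_reg_r with (1 + x ^ 2); [lra|].
  replace (32 / (1 + x ^ 2) * (1 + x ^ 2)) with 32 by (field; lra).
  nra.
Qed.

Definition trunc_expect (n : nat) (f : R -> R) : R :=
  RInt (fun x => gauss x * f x) (- INR n) (INR n).

Section TruncatedExpectation.
Variable n : nat.

Let trunc_le : - INR n <= INR n.
Proof. pose proof (pos_INR n); lra. Qed.

Lemma ex_RInt_gauss_mul (f : R -> R) :
  continuity f -> ex_RInt (fun x => gauss x * f x) (- INR n) (INR n).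
Proof.
  intros Hf. apply ex_RInt_of_continuity, continuity_mult; [apply continuity_gauss | exact Hf].
Qed.

Lemma trunc_expect_ext (f g : R -> R) :
  (forall x, f x = g x) -> trunc_expect n f = trunc_expect n g.
Proof. intros Hfg. apply RInt_ext. intros x _. rewrite Hfg. reflexivity. Qed.

Lemma trunc_expect_plus (f g : R -> R) : continuity f -> continuity g ->
  trunc_expect n (fun x => f x + g x) = trunc_expect n f + trunc_expect n g.
Proof.
  intros Hf Hg. apply is_RInt_unique.
  apply (is_RInt_ext (fun x => plus (gauss x * f x) (gauss x * g x))).
  { intros x _. unfold plus; simpl. ring. }
  exact (is_RInt_plus _ _ _ _ _ _ (RInt_correct _ _ _ (ex_RInt_gauss_mul f Hf))
                                  (RInt_correct _ _ _ (ex_RInt_gauss_mul g Hg))).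
Qed.

Lemma trunc_expect_scal (c : R) (f : R -> R) : continuity f ->
  trunc_expect n (fun x => c * f x) = c * trunc_expect n f.
Proof.
  intros Hf. apply is_RInt_unique.
  apply (is_RInt_ext (fun x => scal c (gauss x * f x))).
  { intros x _. unfold scal; simpl; unfold mult; simpl. ring. }
  exact (is_RInt_scal _ _ _ c _ (RInt_correct _ _ _ (ex_RInt_gauss_mul f Hf))).
Qed.

Lemma trunc_expect_minus (f g : R -> R) : continuity f -> continuity g ->
  trunc_expect n (fun x => f x - g x) = trunc_expect n f - trunc_expect n g.
Proof.
  intros Hf Hg.
  rewrite (trunc_expect_ext _ (fun x => f x + (-1) * g x)) by (intros; ring).
  rewrite trunc_expect_plus, trunc_expect_scal; [ring | assumption | assumption |].
  apply continuity_scal, Hg.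
Qed.

Lemma trunc_expect_ge0 (f : R -> R) : continuity f -> (forall x, 0 <= f x) ->
  0 <= trunc_expect n f.
Proof.
  intros Hf Hpos. apply RInt_ge_0; [exact trunc_le | apply ex_RInt_gauss_mul, Hf |].
  intros x _. apply Rmult_le_pos; [apply Rlt_le, gauss_pos | apply Hpos].
Qed.

Lemma abs_trunc_expect_le (f : R -> R) (M : R) : continuity f ->
  (forall x, Rabs (f x) <= M * (1 + Rabs x) ^ 2) -> Rabs (trunc_expect n f) <= 128 * M.
Proof.
  intros Hf Hbound.
  assert (HM : 0 <= M).
  { specialize (Hbound 0). rewrite Rabs_R0 in Hbound. pose proof (Rabs_pos (f 0)). nra. }
  eapply Rle_trans.
  { apply abs_RInt_le; [exact trunc_le | apply ex_RInt_gauss_mul, Hf]. }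
  eapply Rle_trans.
  { apply (RInt_le _ (fun x => 32 * M / (1 + x ^ 2))); [exact trunc_le | | |].
    - apply ex_RInt_of_continuity. intros x. apply continuity_pt_filterlim.
      apply (continuous_Rabs_comp (fun x => gauss x * f x)), continuity_pt_filterlim.
      apply continuity_mult; [apply continuity_gauss | exact Hf].
    - apply ex_RInt_of_continuity. intros x.
      apply (continuity_pt_ext (fun x => 32 * M * / (1 + x ^ 2))); [reflexivity|].
      apply continuity_pt_scal, continuity_pt_inv; [apply derivable_continuous_pt; reg | nra].
    - intros x _. pose proof (gauss_decay x). pose proof (gauss_pos x). pose proof (Hbound x).
      rewrite Rabs_mult, (Rabs_pos_eq (gauss x)) by lra.
      replace (32 * M / (1 + x ^ 2)) with (M * (32 / (1 + x ^ 2))) by (field; nra).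
      apply Rle_trans with (gauss x * (M * (1 + Rabs x) ^ 2));
        [apply Rmult_le_compat_l; lra | nra]. }
  pose proof (RInt_cauchy_le (32 * M) (INR n)). pose proof PI_4. nra.
Qed.

Lemma trunc_expect_sqrt_diff_sq_le (f g : R -> R) : continuity f -> continuity g ->
  (sqrt (trunc_expect n (fun x => f x ^ 2)) - sqrt (trunc_expect n (fun x => g x ^ 2))) ^ 2
  <= trunc_expect n (fun x => (f x - g x) ^ 2).
Proof.
  intros Hf Hg.
  set (A := trunc_expect n (fun x => f x ^ 2)).
  set (B := trunc_expect n (fun x => g x ^ 2)).
  set (C := trunc_expect n (fun x => f x * g x)).
  assert (Hf2 := continuity_pow2 f Hf). assert (Hg2 := continuity_pow2 g Hg).
  assert (Hfg : continuity (fun x => f x * g x)) by (apply continuity_mult; assumption).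
  assert (Hquad : forall l,
            trunc_expect n (fun x => (l * f x - g x) ^ 2) = l ^ 2 * A - 2 * l * C + B).
  { intros l.
    rewrite (trunc_expect_ext _ (fun x => l ^ 2 * f x ^ 2 + ((-2 * l) * (f x * g x) + g x ^ 2)))
      by (intros; ring).
    rewrite trunc_expect_plus, trunc_expect_scal, trunc_expect_plus, trunc_expect_scal
      by (repeat first [assumption | apply continuity_plus | apply continuity_scal]).
    unfold A, B, C. ring. }
  assert (Hnonneg : forall l, 0 <= l ^ 2 * A - 2 * l * C + B).
  { intros l. rewrite <- Hquad. apply trunc_expect_ge0; [|intros; apply pow2_ge_0].
    apply continuity_pow2, continuity_minus; [apply continuity_scal|]; assumption. }
  assert (HA : 0 <= A) by (apply trunc_expect_ge0; [exact Hf2 | intros; apply pow2_ge_0]).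
  assert (HB : 0 <= B) by (apply trunc_expect_ge0; [exact Hg2 | intros; apply pow2_ge_0]).
  rewrite (trunc_expect_ext _ (fun x => (1 * f x - g x) ^ 2)), Hquad by (intros; ring).
  pose proof (le_sqrt_mul_of_quadratic_ge0 A B C HA HB Hnonneg).
  replace ((sqrt A - sqrt B) ^ 2) with (sqrt A ^ 2 + sqrt B ^ 2 - 2 * (sqrt A * sqrt B)) by ring.
  rewrite !pow2_sqrt by lra. lra.
Qed.

End TruncatedExpectation.

Section SpinSums.
Variable S : nat.

Lemma sum_spins_ext (f g : R -> R) :
  (forall k, (1 <= k <= S)%nat -> f (INR k) = g (INR k)) -> sum_spins S f = sum_spins S g.
Proof.
  induction S as [|S' IH]; intros Hfg; cbn [sum_spins]; [reflexivity|].
  f_equal; [apply IH; intros k Hk|]; apply Hfg; lia.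
Qed.

Lemma sum_spins_ge0 (f : R -> R) :
  (forall k, (1 <= k <= S)%nat -> 0 <= f (INR k)) -> 0 <= sum_spins S f.
Proof.
  induction S as [|S' IH]; intros Hf; cbn [sum_spins]; [lra|].
  apply Rplus_le_le_0_compat; [apply IH; intros k Hk|]; apply Hf; lia.
Qed.

Lemma sum_spins_abs_le (f g : R -> R) :
  (forall k, (1 <= k <= S)%nat -> Rabs (f (INR k)) <= g (INR k)) ->
  Rabs (sum_spins S f) <= sum_spins S g.
Proof.
  induction S as [|S' IH]; intros Hfg; cbn [sum_spins]; [rewrite Rabs_R0; lra|].
  eapply Rle_trans; [apply Rabs_triang|].
  apply Rplus_le_compat; [apply IH; intros k Hk|]; apply Hfg; lia.
Qed.

Lemma sum_spins_scal (c : R) (f : R -> R) :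
  sum_spins S (fun g => c * f g) = c * sum_spins S f.
Proof. induction S as [|S' IH]; cbn [sum_spins]; [|rewrite IH]; ring. Qed.

Lemma is_derive_sum_spins (F dF : R -> R -> R) (y : R) :
  (forall g, is_derive (fun y => F g y) y (dF g y)) ->
  is_derive (fun y => sum_spins S (fun g => F g y)) y (sum_spins S (fun g => dF g y)).
Proof.
  intros HF. induction S as [|S' IH]; cbn [sum_spins].
  - apply (is_derive_const (K := R_AbsRing) (V := R_NormedModule)).
  - apply (is_derive_plus (K := R_AbsRing) (V := R_NormedModule)); [exact IH | apply HF].
Qed.

End SpinSums.

Definition cosh_moment (S k : nat) (y w : R) : R :=
  sum_spins S (fun g => g ^ k * (2 * cosh (g * y)) * exp (g ^ 2 * w)).

Definition sinh_moment (S k : nat) (y w : R) : R :=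
  sum_spins S (fun g => g ^ k * (2 * sinh (g * y)) * exp (g ^ 2 * w)).

(* Single-site Gibbs weights: 1 for the spin 0 and 2 cosh (g y) e^(g^2 w) for the pair of
   spins +-g, g = 1..S; spin_sq_mean and spin_mean are the averages of g^2 and g. *)
Definition spin_partition (S : nat) (y w : R) : R := 1 + cosh_moment S 0 y w.

Definition spin_sq_mean (S : nat) (y w : R) : R := cosh_moment S 2 y w / spin_partition S y w.

Definition spin_mean (S : nat) (y w : R) : R := sinh_moment S 1 y w / spin_partition S y w.

Lemma cosh_pos (u : R) : 0 < cosh u.
Proof. unfold cosh. pose proof (exp_pos u). pose proof (exp_pos (- u)). lra. Qed.

Lemma abs_sinh_le_cosh (u : R) : Rabs (sinh u) <= cosh u.
Proof.
  unfold sinh, cosh. pose proof (exp_pos u). pose proof (exp_pos (- u)). apply Rabs_le. lra.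
Qed.

Section Moments.
Variables (S k : nat).

Lemma is_derive_cosh_moment_y (y w : R) :
  is_derive (fun y => cosh_moment S k y w) y (sinh_moment S (Nat.succ k) y w).
Proof.
  apply (is_derive_sum_spins S (fun g y => g ^ k * (2 * cosh (g * y)) * exp (g ^ 2 * w))
                                (fun g y => g ^ Nat.succ k * (2 * sinh (g * y)) * exp (g ^ 2 * w))).
  intros g. unfold cosh, sinh. auto_derive; [easy | simpl; field].
Qed.

Lemma is_derive_sinh_moment_y (y w : R) :
  is_derive (fun y => sinh_moment S k y w) y (cosh_moment S (Nat.succ k) y w).
Proof.
  apply (is_derive_sum_spins S (fun g y => g ^ k * (2 * sinh (g * y)) * exp (g ^ 2 * w))
                                (fun g y => g ^ Nat.succ k * (2 * cosh (g * y)) * exp (g ^ 2 * w))).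
  intros g. unfold cosh, sinh. auto_derive; [easy | simpl; field].
Qed.

Lemma is_derive_cosh_moment_w (y w : R) :
  is_derive (fun w => cosh_moment S k y w) w (cosh_moment S (Nat.succ (Nat.succ k)) y w).
Proof.
  apply (is_derive_sum_spins S (fun g w => g ^ k * (2 * cosh (g * y)) * exp (g ^ 2 * w))
                    (fun g w => g ^ Nat.succ (Nat.succ k) * (2 * cosh (g * y)) * exp (g ^ 2 * w))).
  intros g. auto_derive; [easy | simpl; ring].
Qed.

Lemma is_derive_sinh_moment_w (y w : R) :
  is_derive (fun w => sinh_moment S k y w) w (sinh_moment S (Nat.succ (Nat.succ k)) y w).
Proof.
  apply (is_derive_sum_spins S (fun g w => g ^ k * (2 * sinh (g * y)) * exp (g ^ 2 * w))
                    (fun g w => g ^ Nat.succ (Nat.succ k) * (2 * sinh (g * y)) * exp (g ^ 2 * w))).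
  intros g. auto_derive; [easy | simpl; ring].
Qed.

Lemma cosh_moment_ge0 (y w : R) : 0 <= cosh_moment S k y w.
Proof.
  apply sum_spins_ge0. intros g _.
  pose proof (pow_le (INR g) k (pos_INR g)). pose proof (cosh_pos (INR g * y)).
  pose proof (exp_pos (INR g ^ 2 * w)).
  apply Rmult_le_pos; [apply Rmult_le_pos|]; lra.
Qed.

Lemma abs_spin_term_le (g : nat) (u v : R) : (1 <= g <= S)%nat -> Rabs u <= v ->
  Rabs (INR g ^ k * u) <= INR S ^ k * v.
Proof.
  intros Hg Huv.
  assert (Hpow : 0 <= INR g ^ k <= INR S ^ k).
  { split; [apply pow_le, pos_INR|]. apply pow_incr. split; [apply pos_INR | apply le_INR; lia]. }
  rewrite Rabs_mult, Rabs_pos_eq by lra.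
  apply Rmult_le_compat; [lra | apply Rabs_pos | lra | exact Huv].
Qed.

Lemma abs_cosh_moment_le (y w : R) :
  Rabs (cosh_moment S k y w) <= INR S ^ k * spin_partition S y w.
Proof.
  apply Rle_trans with (INR S ^ k * cosh_moment S 0 y w).
  - unfold cosh_moment. rewrite <- sum_spins_scal. apply sum_spins_abs_le. intros g Hg.
    rewrite pow_O, Rmult_1_l, Rmult_assoc. apply abs_spin_term_le; [exact Hg|].
    rewrite Rabs_pos_eq; [lra|].
    pose proof (cosh_pos (INR g * y)). pose proof (exp_pos (INR g ^ 2 * w)). nra.
  - apply Rmult_le_compat_l; [apply pow_le, pos_INR | unfold spin_partition; lra].
Qed.

Lemma abs_sinh_moment_le (y w : R) :
  Rabs (sinh_moment S k y w) <= INR S ^ k * spin_partition S y w.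
Proof.
  apply Rle_trans with (INR S ^ k * cosh_moment S 0 y w).
  - unfold sinh_moment, cosh_moment. rewrite <- sum_spins_scal. apply sum_spins_abs_le.
    intros g Hg. rewrite pow_O, Rmult_1_l, Rmult_assoc. apply abs_spin_term_le; [exact Hg|].
    pose proof (exp_pos (INR g ^ 2 * w)).
    pose proof (abs_sinh_le_cosh (INR g * y)).
    rewrite !Rabs_mult, (Rabs_pos_eq 2), (Rabs_pos_eq (exp _)) by lra. nra.
  - apply Rmult_le_compat_l; [apply pow_le, pos_INR | unfold spin_partition; lra].
Qed.

End Moments.

Lemma spin_partition_ge1 (S : nat) (y w : R) : 1 <= spin_partition S y w.
Proof. unfold spin_partition. pose proof (cosh_moment_ge0 S 0 y w). lra. Qed.

Definition lipschitz2 (F : R -> R -> R) (K : R) : Prop :=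
  forall y w y' w', Rabs (F y w - F y' w') <= K * (Rabs (y - y') + Rabs (w - w')).

Lemma lipschitz_of_derive_bound (f df : R -> R) (K a b : R) :
  (forall x, is_derive f x (df x)) -> (forall x, Rabs (df x) <= K) ->
  Rabs (f b - f a) <= K * Rabs (b - a).
Proof.
  intros Hf Hdf.
  destruct (MVT_gen f a b df) as [c [_ Hc]].
  - intros x _. apply Hf.
  - intros x _. apply continuity_of_ex_derive. intros u. exists (df u). apply Hf.
  - rewrite Hc, Rabs_mult. apply Rmult_le_compat_r; [apply Rabs_pos | apply Hdf].
Qed.

Lemma lipschitz2_of_partials (F Fy Fw : R -> R -> R) (K : R) :
  (forall y w, is_derive (fun y => F y w) y (Fy y w)) ->
  (forall y w, is_derive (fun w => F y w) w (Fw y w)) ->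
  (forall y w, Rabs (Fy y w) <= K) -> (forall y w, Rabs (Fw y w) <= K) ->
  lipschitz2 F K.
Proof.
  intros HFy HFw HKy HKw y w y' w'.
  pose proof (lipschitz_of_derive_bound (fun y => F y w) (fun y => Fy y w) K y' y
                (fun y => HFy y w) (fun y => HKy y w)).
  pose proof (lipschitz_of_derive_bound (fun w => F y' w) (Fw y') K w' w (HFw y') (HKw y')).
  replace (F y w - F y' w') with ((F y w - F y' w) + (F y' w - F y' w')) by ring.
  eapply Rle_trans; [apply Rabs_triang | lra].
Qed.

Lemma abs_div_le (A B a : R) : 0 < B -> Rabs A <= a * B -> Rabs (A / B) <= a.
Proof.
  intros HB HA. rewrite Rabs_div, (Rabs_pos_eq B) by lra.
  apply Rmult_le_reg_r with B; [exact HB|]. field_simplify; lra.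
Qed.

Lemma abs_quotient_derive_le (A A' B B' a a' b' : R) : 0 < B ->
  Rabs A <= a * B -> Rabs A' <= a' * B -> Rabs B' <= b' * B ->
  Rabs ((A' * B - A * B') / B ^ 2) <= a' + a * b'.
Proof.
  intros HB HA HA' HB'.
  replace ((A' * B - A * B') / B ^ 2) with (A' / B - (A / B) * (B' / B)) by (field; lra).
  pose proof (abs_div_le A B a HB HA). pose proof (abs_div_le A' B a' HB HA').
  pose proof (abs_div_le B' B b' HB HB').
  eapply Rle_trans; [apply Rabs_triang|]. rewrite Rabs_Ropp, Rabs_mult.
  pose proof (Rabs_pos (A / B)). pose proof (Rabs_pos (B' / B)). nra.
Qed.

Section MomentRatios.
Variable S : nat.

Lemma is_derive_spin_partition_y (y w : R) :
  is_derive (fun y => spin_partition S y w) y (sinh_moment S 1 y w).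
Proof.
  pose proof (is_derive_plus (K := R_AbsRing) (V := R_NormedModule) (fun _ => 1)
                (fun y => cosh_moment S 0 y w) y zero _ (is_derive_const 1 y)
                (is_derive_cosh_moment_y S 0 y w)) as Hsum.
  rewrite plus_zero_l in Hsum. exact Hsum.
Qed.

Lemma is_derive_spin_partition_w (y w : R) :
  is_derive (fun w => spin_partition S y w) w (cosh_moment S 2 y w).
Proof.
  pose proof (is_derive_plus (K := R_AbsRing) (V := R_NormedModule) (fun _ => 1)
                (fun w => cosh_moment S 0 y w) w zero _ (is_derive_const 1 w)
                (is_derive_cosh_moment_w S 0 y w)) as Hsum.
  rewrite plus_zero_l in Hsum. exact Hsum.
Qed.

Lemma lipschitz2_moment_ratio (A Ay Aw : R -> R -> R) (a ay aw K : R) :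
  (forall y w, is_derive (fun y => A y w) y (Ay y w)) ->
  (forall y w, is_derive (fun w => A y w) w (Aw y w)) ->
  (forall y w, Rabs (A y w) <= a * spin_partition S y w) ->
  (forall y w, Rabs (Ay y w) <= ay * spin_partition S y w) ->
  (forall y w, Rabs (Aw y w) <= aw * spin_partition S y w) ->
  ay + a * INR S <= K -> aw + a * INR S ^ 2 <= K ->
  lipschitz2 (fun y w => A y w / spin_partition S y w) K.
Proof.
  intros HAy HAw HA HAy' HAw' HKy HKw.
  assert (HZ : forall y w, 0 < spin_partition S y w).
  { intros y w. pose proof (spin_partition_ge1 S y w). lra. }
  apply (lipschitz2_of_partials _
    (fun y w => (Ay y w * spin_partition S y w - A y w * sinh_moment S 1 y w)
                / spin_partition S y w ^ 2)
    (fun y w => (Aw y w * spin_partition S y w - A y w * cosh_moment S 2 y w)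
                / spin_partition S y w ^ 2)).
  - intros y w. apply (is_derive_div (fun y => A y w) (fun y => spin_partition S y w));
      [apply HAy | apply is_derive_spin_partition_y | apply Rgt_not_eq, HZ].
  - intros y w. apply (is_derive_div (fun w => A y w) (fun w => spin_partition S y w));
      [apply HAw | apply is_derive_spin_partition_w | apply Rgt_not_eq, HZ].
  - intros y w. eapply Rle_trans; [|exact HKy].
    rewrite <- (pow_1 (INR S)).
    apply abs_quotient_derive_le; [apply HZ | apply HA | apply HAy' | apply abs_sinh_moment_le].
  - intros y w. eapply Rle_trans; [|exact HKw].
    apply abs_quotient_derive_le; [apply HZ | apply HA | apply HAw' | apply abs_cosh_moment_le].
Qed.

Lemma abs_spin_sq_mean_le (y w : R) : Rabs (spin_sq_mean S y w) <= INR S ^ 2.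
Proof.
  apply abs_div_le; [pose proof (spin_partition_ge1 S y w); lra | apply abs_cosh_moment_le].
Qed.

Lemma abs_spin_mean_le (y w : R) : Rabs (spin_mean S y w) <= INR S.
Proof.
  rewrite <- (pow_1 (INR S)).
  apply abs_div_le; [pose proof (spin_partition_ge1 S y w); lra | apply abs_sinh_moment_le].
Qed.

Lemma continuity_spin_sq_mean (t h w : R) : continuity (fun x => spin_sq_mean S (t * x + h) w).
Proof.
  apply (continuity_comp (fun x => t * x + h) (fun y => spin_sq_mean S y w));
    [apply continuity_affine|].
  apply continuity_of_ex_derive. intros y. eexists.
  apply (is_derive_div (fun y => cosh_moment S 2 y w) (fun y => spin_partition S y w));
    [apply is_derive_cosh_moment_y | apply is_derive_spin_partition_y |].
  pose proof (spin_partition_ge1 S y w). lra.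
Qed.

Lemma continuity_spin_mean (t h w : R) : continuity (fun x => spin_mean S (t * x + h) w).
Proof.
  apply (continuity_comp (fun x => t * x + h) (fun y => spin_mean S y w));
    [apply continuity_affine|].
  apply continuity_of_ex_derive. intros y. eexists.
  apply (is_derive_div (fun y => sinh_moment S 1 y w) (fun y => spin_partition S y w));
    [apply is_derive_sinh_moment_y | apply is_derive_spin_partition_y |].
  pose proof (spin_partition_ge1 S y w). lra.
Qed.

Definition lip_const : R := 2 * INR S ^ 4.

Lemma lip_const_ge0 : 0 <= lip_const.
Proof. unfold lip_const. pose proof (pow_le (INR S) 4 (pos_INR S)). lra. Qed.

Hypothesis HS : (1 <= S)%nat.

Let spin_pows : 1 <= INR S <= INR S ^ 2 /\ INR S ^ 2 <= INR S ^ 3 <= INR S ^ 4.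
Proof. assert (1 <= INR S) by (apply (le_INR 1); lia). simpl. repeat split; nra. Qed.

Lemma lipschitz2_spin_sq_mean : lipschitz2 (spin_sq_mean S) lip_const.
Proof.
  destruct spin_pows as [[Hs1 Hs2] [Hs3 Hs4]].
  apply (lipschitz2_moment_ratio (cosh_moment S 2) (sinh_moment S 3) (cosh_moment S 4)
                                 (INR S ^ 2) (INR S ^ 3) (INR S ^ 4)); intros.
  - apply is_derive_cosh_moment_y.
  - apply is_derive_cosh_moment_w.
  - apply abs_cosh_moment_le.
  - apply abs_sinh_moment_le.
  - apply abs_cosh_moment_le.
  - unfold lip_const. simpl in *. nra.
  - unfold lip_const. simpl in *. nra.
Qed.

Lemma lipschitz2_spin_mean : lipschitz2 (spin_mean S) lip_const.
Proof.
  destruct spin_pows as [[Hs1 Hs2] [Hs3 Hs4]].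
  apply (lipschitz2_moment_ratio (sinh_moment S 1) (cosh_moment S 2) (sinh_moment S 3)
                                 (INR S ^ 1) (INR S ^ 2) (INR S ^ 3)); intros.
  - apply is_derive_sinh_moment_y.
  - apply is_derive_sinh_moment_w.
  - apply abs_sinh_moment_le.
  - apply abs_cosh_moment_le.
  - apply abs_sinh_moment_le.
  - unfold lip_const. simpl in *. nra.
  - unfold lip_const. simpl in *. nra.
Qed.

End MomentRatios.

Lemma lipschitz2_affine (F : R -> R -> R) (K t w t' w' h x : R) : lipschitz2 F K -> 0 <= K ->
  Rabs (F (t * x + h) w - F (t' * x + h) w')
  <= K * (1 + Rabs x) * (Rabs (t - t') + Rabs (w - w')).
Proof.
  intros HF HK. eapply Rle_trans; [apply HF|].
  replace (t * x + h - (t' * x + h)) with (x * (t - t')) by ring.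
  rewrite Rabs_mult.
  rewrite Rmult_assoc. apply Rmult_le_compat_l; [exact HK|].
  pose proof (Rabs_pos x). pose proof (Rabs_pos (t - t')). pose proof (Rabs_pos (w - w')).
  nra.
Qed.

Section TruncatedFieldEstimates.
Variables (S n : nat) (t w t' w' h : R).

Lemma abs_trunc_expect_spin_sq_mean_le :
  Rabs (trunc_expect n (fun x => spin_sq_mean S (t * x + h) w)) <= 128 * INR S ^ 2.
Proof.
  apply abs_trunc_expect_le; [apply continuity_spin_sq_mean|]. intros x.
  pose proof (abs_spin_sq_mean_le S (t * x + h) w). pose proof (one_plus_abs_bounds x).
  pose proof (pow_le (INR S) 2 (pos_INR S)). nra.
Qed.

Lemma abs_trunc_expect_spin_mean_sq_le :
  Rabs (trunc_expect n (fun x => spin_mean S (t * x + h) w ^ 2)) <= 128 * INR S ^ 2.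
Proof.
  apply abs_trunc_expect_le; [apply continuity_pow2, continuity_spin_mean|]. intros x.
  rewrite Rabs_pos_eq by apply pow2_ge_0. rewrite <- pow2_abs.
  pose proof (abs_spin_mean_le S (t * x + h) w). pose proof (one_plus_abs_bounds x).
  pose proof (Rabs_pos (spin_mean S (t * x + h) w)). nra.
Qed.

Lemma trunc_expect_spin_mean_sq_ge0 :
  0 <= trunc_expect n (fun x => spin_mean S (t * x + h) w ^ 2).
Proof.
  apply trunc_expect_ge0; [apply continuity_pow2, continuity_spin_mean | intros; apply pow2_ge_0].
Qed.

Hypothesis HS : (1 <= S)%nat.

Let gap := Rabs (t - t') + Rabs (w - w').

Let gap_ge0 : 0 <= gap.
Proof. pose proof (Rabs_pos (t - t')). pose proof (Rabs_pos (w - w')). unfold gap. lra. Qed.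

Lemma trunc_expect_spin_sq_mean_diff_le :
  Rabs (trunc_expect n (fun x => spin_sq_mean S (t * x + h) w)
        - trunc_expect n (fun x => spin_sq_mean S (t' * x + h) w'))
  <= 128 * (lip_const S * gap).
Proof.
  rewrite <- trunc_expect_minus by apply continuity_spin_sq_mean.
  apply abs_trunc_expect_le; [apply continuity_minus; apply continuity_spin_sq_mean|].
  intros x.
  pose proof (lipschitz2_affine (spin_sq_mean S) (lip_const S) t w t' w' h x
                (lipschitz2_spin_sq_mean S HS) (lip_const_ge0 S)) as Hlip. fold gap in Hlip.
  pose proof (one_plus_abs_bounds x). pose proof (lip_const_ge0 S).
  assert (0 <= lip_const S * gap) by (apply Rmult_le_pos; assumption). nra.
Qed.

Lemma trunc_expect_spin_mean_sq_diff_le :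
  Rabs (trunc_expect n (fun x => spin_mean S (t * x + h) w ^ 2)
        - trunc_expect n (fun x => spin_mean S (t' * x + h) w' ^ 2))
  <= 128 * (2 * INR S * lip_const S * gap).
Proof.
  rewrite <- trunc_expect_minus by (apply continuity_pow2, continuity_spin_mean).
  apply abs_trunc_expect_le;
    [apply continuity_minus; apply continuity_pow2, continuity_spin_mean|].
  intros x.
  set (m := spin_mean S (t * x + h) w). set (m' := spin_mean S (t' * x + h) w').
  pose proof (lipschitz2_affine (spin_mean S) (lip_const S) t w t' w' h x
                (lipschitz2_spin_mean S HS) (lip_const_ge0 S)) as Hlip.
  fold m m' gap in Hlip.
  assert (Hsum : Rabs (m + m') <= 2 * INR S).
  { eapply Rle_trans; [apply Rabs_triang|].
    pose proof (abs_spin_mean_le S (t * x + h) w) as Hm.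
    pose proof (abs_spin_mean_le S (t' * x + h) w') as Hm'.
    fold m m' in Hm, Hm'. lra. }
  replace (m ^ 2 - m' ^ 2) with ((m - m') * (m + m')) by ring.
  rewrite Rabs_mult.
  pose proof (one_plus_abs_bounds x). pose proof (lip_const_ge0 S). pose proof (pos_INR S).
  pose proof (Rabs_pos (m - m')). pose proof (Rabs_pos (m + m')).
  assert (0 <= lip_const S * gap) by (apply Rmult_le_pos; assumption).
  apply Rle_trans with (lip_const S * (1 + Rabs x) * gap * (2 * INR S));
    [apply Rmult_le_compat; assumption|].
  replace (lip_const S * (1 + Rabs x) * gap * (2 * INR S))
    with (2 * INR S * lip_const S * gap * (1 + Rabs x)) by ring.
  apply Rmult_le_compat_l; [nra | lra].
Qed.

Lemma sqrt_trunc_expect_spin_mean_sq_diff_le :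
  Rabs (sqrt (trunc_expect n (fun x => spin_mean S (t * x + h) w ^ 2))
        - sqrt (trunc_expect n (fun x => spin_mean S (t' * x + h) w' ^ 2)))
  <= 12 * (lip_const S * gap).
Proof.
  pose proof (lip_const_ge0 S).
  assert (HL : 0 <= lip_const S * gap) by (apply Rmult_le_pos; assumption).
  assert (Hdiff : trunc_expect n (fun x => (spin_mean S (t * x + h) w - spin_mean S (t' * x + h) w') ^ 2)
                  <= 128 * (lip_const S * gap) ^ 2).
  { eapply Rle_trans; [apply Rle_abs|].
    apply abs_trunc_expect_le;
      [apply continuity_pow2, continuity_minus; apply continuity_spin_mean|].
    intros x. rewrite Rabs_pos_eq by apply pow2_ge_0.
    pose proof (lipschitz2_affine (spin_mean S) (lip_const S) t w t' w' h x
                  (lipschitz2_spin_mean S HS) (lip_const_ge0 S)) as Hlip. fold gap in Hlip.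
    rewrite <- pow2_abs.
    replace ((lip_const S * gap) ^ 2 * (1 + Rabs x) ^ 2)
      with ((lip_const S * (1 + Rabs x) * gap) ^ 2) by ring.
    apply pow_incr. split; [apply Rabs_pos | exact Hlip]. }
  pose proof (trunc_expect_sqrt_diff_sq_le n _ _ (continuity_spin_mean S t h w)
                (continuity_spin_mean S t' h w')) as Hcs.
  cbv beta in Hcs.
  apply abs_le_of_pow2_le; [lra | nra].
Qed.

End TruncatedFieldEstimates.

Lemma Zden_spin_partition (S : nat) (b D h p q x : R) :
  Zden S b D h p q x = spin_partition S (sqrt q * b * x + h) (D + b ^ 2 / 2 * (p - q)).
Proof. unfold Zden, spin_partition, cosh_moment. f_equal. apply sum_spins_ext. intros. unfold fld, efac. ring. Qed.

Lemma numP_cosh_moment (S : nat) (b D h p q x : R) :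
  numP S b D h p q x = cosh_moment S 2 (sqrt q * b * x + h) (D + b ^ 2 / 2 * (p - q)).
Proof. unfold numP, cosh_moment. apply sum_spins_ext. intros. unfold fld, efac. ring. Qed.

Lemma numQ_sinh_moment (S : nat) (b D h p q x : R) :
  numQ S b D h p q x = sinh_moment S 1 (sqrt q * b * x + h) (D + b ^ 2 / 2 * (p - q)).
Proof. unfold numQ, sinh_moment. apply sum_spins_ext. intros. unfold fld, efac. ring. Qed.

Lemma is_solution_lim (S : nat) (b D h p q : R) : is_solution S b D h p q ->
  is_lim_seq (fun n => trunc_expect n
    (fun x => spin_sq_mean S (sqrt q * b * x + h) (D + b ^ 2 / 2 * (p - q)))) p /\
  is_lim_seq (fun n => trunc_expect n
    (fun x => spin_mean S (sqrt q * b * x + h) (D + b ^ 2 / 2 * (p - q)) ^ 2)) q.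
Proof.
  intros [Hp Hq]. split.
  - eapply is_lim_seq_ext; [|exact (is_RInt_gen_lim_seq _ _ Hp)]. intros n.
    apply RInt_ext. intros x _. unfold spin_sq_mean. rewrite numP_cosh_moment, Zden_spin_partition.
    reflexivity.
  - eapply is_lim_seq_ext; [|exact (is_RInt_gen_lim_seq _ _ Hq)]. intros n.
    apply RInt_ext. intros x _. unfold spin_mean. rewrite numQ_sinh_moment, Zden_spin_partition.
    reflexivity.
Qed.

Definition coupling_const (S : nat) : R := 256 * INR S * lip_const S.

Lemma coupling_const_bounds (S : nat) : (1 <= S)%nat ->
  1 <= coupling_const S /\ 128 * INR S ^ 2 <= coupling_const S /\ 128 * lip_const S <= coupling_const S.
Proof.
  intros HS. assert (Hs : 1 <= INR S) by (apply (le_INR 1); lia).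
  replace (coupling_const S) with (512 * INR S ^ 5) by (unfold coupling_const, lip_const; ring).
  unfold lip_const.
  pose proof (pow_R1_Rle _ 5 Hs). pose proof (Rle_pow _ 2 5 Hs ltac:(lia)).
  pose proof (Rle_pow _ 4 5 Hs ltac:(lia)). lra.
Qed.

Definition effective_gap (b b' p q p' q' : R) : R :=
  Rabs (sqrt q * b - sqrt q' * b') + Rabs (b ^ 2 / 2 * (p - q) - b' ^ 2 / 2 * (p' - q')).

Lemma effective_gap_ge0 (b b' p q p' q' : R) : 0 <= effective_gap b b' p q p' q'.
Proof.
  unfold effective_gap. pose proof (Rabs_pos (sqrt q * b - sqrt q' * b')).
  pose proof (Rabs_pos (b ^ 2 / 2 * (p - q) - b' ^ 2 / 2 * (p' - q'))). lra.
Qed.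

Lemma solution_bounds (S : nat) (b D h p q : R) : (1 <= S)%nat -> is_solution S b D h p q ->
  Rabs p <= coupling_const S /\ 0 <= q <= coupling_const S.
Proof.
  intros HS Hsol. destruct (is_solution_lim _ _ _ _ _ _ Hsol) as [Hp Hq].
  destruct (coupling_const_bounds S HS) as [_ [HC _]].
  split; [|split].
  - eapply Rle_trans; [|exact HC].
    apply (is_lim_seq_abs_le _ _ _ Hp). intros n. apply abs_trunc_expect_spin_sq_mean_le.
  - apply (is_lim_seq_ge0 _ _ Hq). intros n. apply trunc_expect_spin_mean_sq_ge0.
  - eapply Rle_trans; [apply Rle_abs | eapply Rle_trans; [|exact HC]].
    apply (is_lim_seq_abs_le _ _ _ Hq). intros n. apply abs_trunc_expect_spin_mean_sq_le.
Qed.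

Lemma solutions_close (S : nat) (b b' D h p q p' q' : R) : (1 <= S)%nat ->
  is_solution S b D h p q -> is_solution S b' D h p' q' ->
  Rabs (p - p') <= coupling_const S * effective_gap b b' p q p' q' /\
  Rabs (q - q') <= coupling_const S * effective_gap b b' p q p' q' /\
  Rabs (sqrt q - sqrt q') <= coupling_const S * effective_gap b b' p q p' q'.
Proof.
  intros HS Hsol Hsol'.
  destruct (is_solution_lim _ _ _ _ _ _ Hsol) as [Hp Hq].
  destruct (is_solution_lim _ _ _ _ _ _ Hsol') as [Hp' Hq'].
  destruct (solution_bounds _ _ _ _ _ _ HS Hsol) as [_ [Hq0 _]].
  destruct (solution_bounds _ _ _ _ _ _ HS Hsol') as [_ [Hq0' _]].
  pose proof (effective_gap_ge0 b b' p q p' q') as HX0.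
  set (X := effective_gap b b' p q p' q') in *.
  assert (HX : Rabs (sqrt q * b - sqrt q' * b')
               + Rabs (D + b ^ 2 / 2 * (p - q) - (D + b' ^ 2 / 2 * (p' - q'))) = X).
  { unfold X, effective_gap. do 2 f_equal. ring. }
  pose proof (lip_const_ge0 S). pose proof (coupling_const_bounds S HS) as [_ [_ HC]].
  assert (Hs : 1 <= INR S) by (apply (le_INR 1); lia).
  repeat split.
  - apply (is_lim_seq_abs_le _ _ _ (is_lim_seq_minus' _ _ _ _ Hp Hp')). intros n.
    eapply Rle_trans; [apply trunc_expect_spin_sq_mean_diff_le; exact HS|].
    rewrite HX. nra.
  - apply (is_lim_seq_abs_le _ _ _ (is_lim_seq_minus' _ _ _ _ Hq Hq')). intros n.
    eapply Rle_trans; [apply trunc_expect_spin_mean_sq_diff_le; exact HS|].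
    rewrite HX. unfold coupling_const. nra.
  - apply (is_lim_seq_abs_le _ _ _ (is_lim_seq_minus' _ _ _ _
             (is_lim_seq_continuous sqrt _ _ (continuity_pt_sqrt _ Hq0) Hq)
             (is_lim_seq_continuous sqrt _ _ (continuity_pt_sqrt _ Hq0') Hq'))).
    intros n.
    eapply Rle_trans; [apply sqrt_trunc_expect_spin_mean_sq_diff_le; exact HS|].
    rewrite HX. nra.
Qed.

Lemma abs_field_diff_le (C beta e r X s s' : R) :
  0 <= beta -> 0 <= r <= 1 -> 1 - r <= e -> 0 <= s <= C -> Rabs (s - s') <= C * X ->
  Rabs (s * beta - s' * (beta * r)) <= beta * C * (e + X).
Proof.
  intros Hb Hr H1r Hs Hss'.
  replace (s * beta - s' * (beta * r)) with (beta * (s * (1 - r) + r * (s - s'))) by ring.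
  rewrite Rabs_mult, (Rabs_pos_eq beta), Rmult_assoc by lra.
  apply Rmult_le_compat_l; [lra|].
  eapply Rle_trans; [apply Rabs_triang|].
  rewrite !Rabs_mult, (Rabs_pos_eq s), (Rabs_pos_eq (1 - r)), (Rabs_pos_eq r) by lra.
  pose proof (Rabs_pos (s - s')). nra.
Qed.

Lemma abs_coupling_diff_le (C beta e r X p q p' q' : R) :
  0 <= e -> 0 <= r -> r ^ 2 = 1 - e -> Rabs p <= C -> 0 <= q <= C ->
  Rabs (p - p') <= C * X -> Rabs (q - q') <= C * X ->
  Rabs (beta ^ 2 / 2 * (p - q) - (beta * r) ^ 2 / 2 * (p' - q')) <= beta ^ 2 * C * (e + X).
Proof.
  intros He Hr Hr2 Hp Hq Hpp' Hqq'.
  replace (beta ^ 2 / 2 * (p - q) - (beta * r) ^ 2 / 2 * (p' - q'))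
    with (beta ^ 2 / 2 * (e * (p - q) + r ^ 2 * ((p - p') - (q - q'))))
    by (replace e with (1 - r ^ 2) by lra; field).
  assert (Hb2 : 0 <= beta ^ 2 / 2) by nra.
  rewrite Rabs_mult, (Rabs_pos_eq (beta ^ 2 / 2)) by lra.
  replace (beta ^ 2 * C * (e + X)) with (beta ^ 2 / 2 * (e * (2 * C) + 1 * (2 * (C * X))))
    by field.
  apply Rmult_le_compat_l; [lra|].
  eapply Rle_trans; [apply Rabs_triang|].
  rewrite !Rabs_mult, (Rabs_pos_eq e), (Rabs_pos_eq (r ^ 2)) by nra.
  assert (Rabs (p - q) <= 2 * C).
  { unfold Rminus. eapply Rle_trans; [apply Rabs_triang|]. rewrite Rabs_Ropp, (Rabs_pos_eq q); lra. }
  assert (Rabs (p - p' - (q - q')) <= 2 * (C * X)).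
  { unfold Rminus at 1. eapply Rle_trans; [apply Rabs_triang|]. rewrite Rabs_Ropp. lra. }
  apply Rplus_le_compat; apply Rmult_le_compat; try apply Rabs_pos; nra.
Qed.

Lemma effective_gap_le (C beta e r p q p' q' : R) :
  1 <= C -> 0 <= beta -> 4 * C * beta <= 1 -> 0 <= e -> 0 <= r -> r ^ 2 = 1 - e ->
  Rabs p <= C -> 0 <= q <= C ->
  Rabs (p - p') <= C * effective_gap beta (beta * r) p q p' q' ->
  Rabs (q - q') <= C * effective_gap beta (beta * r) p q p' q' ->
  Rabs (sqrt q - sqrt q') <= C * effective_gap beta (beta * r) p q p' q' ->
  effective_gap beta (beta * r) p q p' q' <= e.
Proof.
  intros HC Hb0 Hb He Hr0 Hr2 Hp Hq Dp Dq Ds.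
  pose proof (effective_gap_ge0 beta (beta * r) p q p' q') as HX0.
  set (X := effective_gap beta (beta * r) p q p' q') in *.
  assert (Hr1 : r <= 1) by nra.
  assert (Hsq : 0 <= sqrt q <= C).
  { split; [apply sqrt_pos|].
    apply Rle_trans with (sqrt (C ^ 2)); [apply sqrt_le_1_alt; nra | rewrite sqrt_pow2; lra]. }
  pose proof (abs_field_diff_le C beta e r X (sqrt q) (sqrt q') Hb0 (conj Hr0 Hr1)
                ltac:(nra) Hsq Ds).
  pose proof (abs_coupling_diff_le C beta e r X p q p' q' He Hr0 Hr2 Hp Hq Dp Dq).
  assert (Hsmall : beta * C + beta ^ 2 * C <= 1 / 2) by nra.
  assert (HXe : X <= (beta * C + beta ^ 2 * C) * (e + X)) by (unfold X at 1, effective_gap; lra).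
  assert ((beta * C + beta ^ 2 * C) * (e + X) <= 1 / 2 * (e + X))
    by (apply Rmult_le_compat_r; lra).
  lra.
Qed.

Theorem lemma6 (S : nat) : (1 <= S)%nat ->
  exists K beta_hat : R, 0 < K /\ 0 < beta_hat /\
    forall (beta D h : R) (N : nat) (p q pm qm : R),
      0 <= beta -> beta < beta_hat -> (2 <= N)%nat ->
      is_unique_solution S beta D h p q ->
      is_unique_solution S (beta * sqrt ((INR N - 1) / INR N)) D h pm qm ->
      Rabs (p - pm) <= K / INR N /\ Rabs (q - qm) <= K / INR N.
Proof.
  intros HS.
  destruct (coupling_const_bounds S HS) as [HC _].
  set (C := coupling_const S) in *.
  exists C, (/ (4 * C)). split; [lra | split; [apply Rinv_0_lt_compat; lra|]].
  intros beta D h N p q pm qm Hb0 Hb HN [Hsol _] [Hsolm _].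
  assert (Hbeta : 4 * C * beta <= 1).
  { apply Rmult_lt_compat_l with (r := 4 * C) in Hb; [|lra].
    rewrite Rinv_r in Hb; lra. }
  assert (HN2 : 2 <= INR N) by (apply (le_INR 2); lia).
  set (r := sqrt ((INR N - 1) / INR N)).
  assert (Hr2 : r ^ 2 = 1 - / INR N).
  { unfold r. rewrite pow2_sqrt; [field | apply Rdiv_le_0_compat]; lra. }
  destruct (solution_bounds _ _ _ _ _ _ HS Hsol) as [Hp Hq].
  destruct (solutions_close _ _ _ _ _ _ _ _ _ HS Hsol Hsolm) as [Dp [Dq Ds]].
  assert (Hgap : effective_gap beta (beta * r) p q pm qm <= / INR N).
  { apply (effective_gap_le C); try assumption.
    - apply Rlt_le, Rinv_0_lt_compat. lra.
    - apply sqrt_pos. }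
  unfold Rdiv. split; (eapply Rle_trans; [eassumption | apply Rmult_le_compat_l; [lra | exact Hgap]]).
Qed.
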